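(* For every integer $n\geqslant 2$, $\mathbf{I}\mathbb{N}_{\infty}^n$ is an $E$-unitary inverse semigroup.
   Context: $\mathbb{N}=\{1,2,3,\ldots\}$ and $\mathbb{N}^n$ carries the Euclidean metric $d$. A partial isometry of $\mathbb{N}^n$ is an injective partial map $\alpha\colon\mathbb{N}^n\rightharpoonup\mathbb{N}^n$ with $d((\mathbf{x})\alpha,(\mathbf{y})\alpha)=d(\mathbf{x},\mathbf{y})$ for all $\mathbf{x},\mathbf{y}\in\operatorname{dom}\alpha$; it is cofinite if $\mathbb{N}^n\setminus\operatorname{dom}\alpha$ and $\mathbb{N}^n\setminus\operatorname{ran}\alpha$ are finite. $\mathbf{I}\mathbb{N}_{\infty}^n$ is the monoid of all partial cofinite isometries of $\mathbb{N}^n$ under composition of partial maps. An inverse semigroup $S$ is $E$-unitary if whenever $e$ is an idempotent, $s\in S$ and $e\preccurlyeq s$ (natural partial order: $a\preccurlyeq b$ iff $a=bf$ for some idempotent $f$), then $s$ is an idempotent. *)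

From HB Require Import structures.
From mathcomp Require Import all_boot all_order all_algebra.
Set Implicit Arguments. Unset Strict Implicit. Unset Printing Implicit Defensive.
Import Order.TTheory GRing.Theory Num.Theory.

(* Points of Z^n-like ambient type: finite functions 'I_n -> nat.
   N^n (N = {1,2,...}) is the subset of those with all coordinates >= 1. *)
Definition pt (n : nat) := {ffun 'I_n -> nat}.

Definition inN (n : nat) (x : pt n) : Prop := forall i : 'I_n, 0 < x i.

(* Squared Euclidean distance (an integer). d(x,y) = sqrt (sqdist x y), so
   d(x',y') = d(x,y) iff sqdist x' y' = sqdist x y. *)
Definition sqdist (n : nat) (x y : pt n) : int :=
  (\sum_(i < n) ((x i)%:Z - (y i)%:Z) ^+ 2)%R.

Definition pmap (n : nat) := pt n -> option (pt n).

Definition is_pmap_on_N (n : nat) (a : pmap n) : Prop :=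
  (forall x, ~ inN x -> a x = None) /\
  (forall x y, a x = Some y -> inN y).

Definition pinjective (n : nat) (a : pmap n) : Prop :=
  forall x y z, a x = Some z -> a y = Some z -> x = y.

Definition pisometry (n : nat) (a : pmap n) : Prop :=
  forall x y x' y', a x = Some x' -> a y = Some y' -> sqdist x' y' = sqdist x y.

Definition cofinite_dom (n : nat) (a : pmap n) : Prop :=
  exists s : seq (pt n), forall x, inN x -> a x = None -> x \in s.

Definition cofinite_ran (n : nat) (a : pmap n) : Prop :=
  exists s : seq (pt n), forall y, inN y -> (forall x, a x <> Some y) -> y \in s.

Definition INinf (n : nat) (a : pmap n) : Prop :=
  [/\ is_pmap_on_N a, pinjective a, pisometry a, cofinite_dom a & cofinite_ran a].

(* composition of partial maps, maps written on the right: (x)(a b) = ((x)a)b *)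
Definition pcomp (n : nat) (a b : pmap n) : pmap n := fun x => obind b (a x).

Definition pid (n : nat) : pmap n :=
  fun x => if [forall i, 0 < x i] then Some x else None.

Definition idempotent_in (n : nat) (e : pmap n) : Prop :=
  INinf e /\ pcomp e e = e.

Definition npo (n : nat) (a b : pmap n) : Prop :=
  exists f, idempotent_in f /\ a = pcomp b f.

Definition is_inverse_monoid (n : nat) : Prop :=
  [/\ INinf (@pid n),
      (forall a b : pmap n, INinf a -> INinf b -> INinf (pcomp a b)),
      (forall a b c : pmap n, pcomp (pcomp a b) c = pcomp a (pcomp b c)),
      (forall a : pmap n, INinf a -> pcomp (@pid n) a = a /\ pcomp a (@pid n) = a)
    & (forall a : pmap n, INinf a ->
        exists b : pmap n, [/\ INinf b, pcomp (pcomp a b) a = a, pcomp (pcomp b a) b = b &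
          forall c : pmap n, INinf c -> pcomp (pcomp a c) a = a -> pcomp (pcomp c a) c = c -> c = b])].

Definition E_unitary (n : nat) : Prop :=
  forall e s : pmap n, idempotent_in e -> INinf s -> npo e s -> idempotent_in s.

(* For
   E-unitarity, let an idempotent e satisfy e = s f with f idempotent.
   Idempotents are identities on cofinite subsets of N^n, so s fixes every
   point whose coordinates all exceed a bound M.  In particular s fixes
   p = (M+1, ..., M+1) and its neighbours p + e_j.  Since
   |x - (p + e_j)|^2 = |x - p|^2 + 1 - 2 (x_j - p_j), an isometry fixing these
   n + 1 points determines every coordinate of the image of x, so s is the
   identity on its domain, i.e. an idempotent. *)
From Pilot Require Import Defs.
From mathcomp Require Import all_boot all_order all_algebra.
From mathcomp Require Import zify ring.
From Stdlib Require Import Classical ClassicalEpsilon FunctionalExtensionality.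
Set Implicit Arguments. Unset Strict Implicit.
Import GRing.Theory.

(* Unqualified [pcomp] is ssrfun's composition of option-valued maps, with the
   opposite argument order. *)
Section PartialCofiniteIsometries.
Variable n : nat.
Implicit Types (x y z : pt n) (a b c e f s : Defs.pmap n).

Lemma pid_inN x : inN x -> pid x = Some x.
Proof. by move=> Hx; rewrite /pid (introT forallP Hx). Qed.

Lemma pid_notinN x : ~ inN x -> pid x = None.
Proof. by move=> Nx; rewrite /pid; case: forallP. Qed.

Lemma pid_Some x y : pid x = Some y -> y = x /\ inN y.
Proof. by rewrite /pid; case: forallP => // Hx [<-]. Qed.

Lemma pmap_dom_inN a x y : is_pmap_on_N a -> a x = Some y -> inN x.
Proof. by case=> Ha _ Hxy; apply: NNPP => Nx; rewrite Ha in Hxy. Qed.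

Lemma finite_preimage a (s : seq (pt n)) : pinjective a ->
  exists t : seq (pt n), forall x y, a x = Some y -> y \in s -> x \in t.
Proof.
move=> Ainj; elim: s => [|y s [t Ht]]; first by exists [::].
have [[x0 Hx0]|Ny] := classic (exists x, a x = Some y).
- exists (x0 :: t) => x y' Hx; rewrite !in_cons => /orP[/eqP Ey'|Hy'].
  + by subst y'; rewrite (Ainj x x0 y Hx Hx0) eqxx.
  + by rewrite (Ht x y' Hx Hy') orbT.
- exists t => x y' Hx; rewrite in_cons => /orP[/eqP Ey'|]; last exact: Ht Hx.
  by subst y'; case: Ny; exists x.
Qed.

Lemma INinf_pid : INinf (@pid n).
Proof.
split.
- by split=> [|x y /pid_Some[]]; first exact: pid_notinN.
- by move=> x y z /pid_Some[-> _] /pid_Some[-> _].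
- by move=> x y x' y' /pid_Some[-> _] /pid_Some[-> _].
- by exists [::] => x /pid_inN ->.
- by exists [::] => y /pid_inN Hy /(_ y).
Qed.

Lemma INinf_pcomp a b : INinf a -> INinf b -> INinf (Defs.pcomp a b).
Proof.
case=> [[Ha1 Ha2] Ainj Aiso [da Hda] [ra Hra]].
case=> [[Hb1 Hb2] Binj Biso [db Hdb] [rb Hrb]].
rewrite /Defs.pcomp; split.
- split=> [x Nx|x y] /=; first by rewrite Ha1.
  by case: (a x) => //= u; apply: Hb2.
- move=> x y z; case Ex: (a x) => [u|] //=; case Ey: (a y) => [v|] //= Hu Hv.
  by move: Ex; rewrite (Binj _ _ _ Hu Hv) => Ex; apply: Ainj Ex Ey.
- move=> x y x' y'; case Ex: (a x) => [u|] //=; case Ey: (a y) => [v|] //= Hu Hv.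
  by rewrite (Biso _ _ _ _ Hu Hv) (Aiso _ _ _ _ Ex Ey).
- have [t Ht] := finite_preimage db Ainj.
  exists (da ++ t) => x Hx; rewrite mem_cat; case Ex: (a x) => [u|] /= Hu.
  + by rewrite (Ht x u Ex) ?orbT // Hdb //; apply: Ha2 Ex.
  + by rewrite Hda.
- exists (rb ++ seq.pmap b ra) => y Hy Ny; rewrite mem_cat.
  have [[z Hz]|Nz] := classic (exists z, b z = Some y); last first.
    by rewrite Hrb // => z Hz; apply: Nz; exists z.
  have Hzra : z \in ra.
    by apply: Hra => [|x Hx]; [apply: pmap_dom_inN Hz | apply: (Ny x); rewrite Hx].
  by rewrite mem_pmap -Hz map_f ?orbT.
Qed.

Lemma pcompA a b c : Defs.pcomp (Defs.pcomp a b) c = Defs.pcomp a (Defs.pcomp b c).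
Proof. by apply: functional_extensionality => x; rewrite /Defs.pcomp; case: (a x). Qed.

Lemma pcomp_pidl a : is_pmap_on_N a -> Defs.pcomp (@pid n) a = a.
Proof.
case=> Ha _; apply: functional_extensionality => x; rewrite /Defs.pcomp.
have [/pid_inN -> //|Nx] := classic (inN x).
by rewrite pid_notinN // Ha.
Qed.

Lemma pcomp_pidr a : is_pmap_on_N a -> Defs.pcomp a (@pid n) = a.
Proof.
case=> _ Ha; apply: functional_extensionality => x; rewrite /Defs.pcomp.
by case Hx: (a x) => [y|] //=; rewrite pid_inN //; apply: Ha Hx.
Qed.

Definition pinv a : Defs.pmap n := fun y =>
  match excluded_middle_informative (exists x, a x = Some y) with
  | left Hy => Some (proj1_sig (constructive_indefinite_description _ Hy))
  | right _ => None
  end.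

Lemma pinvP a x y : pinjective a -> pinv a y = Some x <-> a x = Some y.
Proof.
move=> Ainj; rewrite /pinv; case: excluded_middle_informative => [Hy|Ny].
- case: constructive_indefinite_description => z Hz /=.
  by split=> [[<-] //|Hx]; rewrite (Ainj z x y Hz Hx).
- by split=> // Hx; case: Ny; exists x.
Qed.

Lemma INinf_pinv a : INinf a -> INinf (pinv a).
Proof.
case=> [[Ha1 Ha2] Ainj Aiso [da Hda] [ra Hra]].
have inv x y : pinv a y = Some x <-> a x = Some y := pinvP x y Ainj.
split.
- split=> [y Ny|y x /inv Hx]; last exact: pmap_dom_inN Hx.
  by case Ey: (pinv a y) => [x|] //; case: Ny; apply: (Ha2 x); apply/inv.
- by move=> x y z /inv Hx /inv Hy; move: Hy; rewrite Hx => -[].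
- by move=> x y x' y' /inv Hx /inv Hy; rewrite (Aiso _ _ _ _ Hx Hy).
- exists ra => y Hy Ny; apply: Hra => // x Hx.
  by rewrite (proj2 (inv x y) Hx) in Ny.
- exists da => x Hx Nx; apply: Hda => //; case Ex: (a x) => [y|] //.
  by case: (Nx y); apply/inv.
Qed.

Lemma pinv_unique a c : pinjective a -> pinjective c ->
  Defs.pcomp (Defs.pcomp a c) a = a -> Defs.pcomp (Defs.pcomp c a) c = c -> c = pinv a.
Proof.
move=> Ainj Cinj aca cac; apply: functional_extensionality => y.
have := congr1 (fun g => g y) cac; rewrite /Defs.pcomp.
case Ey: (c y) => [z|] /=.
- case Ez: (a z) => [w|] //= Hw.
  by move: Ez; rewrite -(Cinj _ _ _ Ey Hw) => /(pinvP _ _ Ainj).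
- case Ex: (pinv a y) => [x|] // _.
  have Hx := proj1 (pinvP _ _ Ainj) Ex.
  by have := congr1 (fun g => g x) aca; rewrite /Defs.pcomp Hx /= Ey.
Qed.

Lemma INinf_inverse_monoid : is_inverse_monoid n.
Proof.
split=> [||||a Ha]; first exact: INinf_pid.
- exact: INinf_pcomp.
- exact: pcompA.
- by move=> a [Ha _ _ _ _]; rewrite pcomp_pidl ?pcomp_pidr.
have Ainj : pinjective a by case: Ha.
exists (pinv a); split.
- exact: INinf_pinv.
- apply: functional_extensionality => x; rewrite /Defs.pcomp.
  by case Hx: (a x) => [y|] //=; rewrite (proj2 (pinvP _ _ Ainj) Hx) /= Hx.
- apply: functional_extensionality => y; rewrite /Defs.pcomp.
  by case Ey: (pinv a y) => [x|] //=; rewrite (proj1 (pinvP _ _ Ainj) Ey) /= Ey.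
- by move=> c [_ Cinj _ _ _]; apply: pinv_unique.
Qed.

Lemma idempotent_in_fix e x y : idempotent_in e -> e x = Some y -> y = x.
Proof.
case=> [[_ Einj _ _ _] ee] Hxy.
have := congr1 (fun g => g x) ee; rewrite /Defs.pcomp Hxy /= => Hy.
exact: esym (Einj x y y Hxy Hy).
Qed.

Lemma bounded_coords (s : seq (pt n)) :
  exists M, forall q, q \in s -> forall i, q i < M.
Proof.
elim: s => [|q s [M HM]]; first by exists 0.
exists (M + \sum_(i < n) q i).+1 => q'; rewrite in_cons => /orP[/eqP -> i|Hq' i].
- by rewrite ltnS (bigD1 i) //= addnC -addnA leq_addr.
- by have := HM q' Hq' i; lia.
Qed.

Definition bump (p : pt n) (j : 'I_n) : pt n := [ffun i => p i + (i == j)].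

Lemma sqdist_bump x p j :
  sqdist x (bump p j) = (sqdist x p + 1 - 2 * ((x j)%:Z - (p j)%:Z))%R.
Proof.
rewrite /sqdist (bigD1 j) //= [in RHS](bigD1 j) //=.
under eq_bigr => i /negbTE ij do rewrite /bump ffunE ij addn0.
rewrite /bump ffunE eqxx /= PoszD.
set rest := (\sum_(i < n | i != j) _)%R; ring.
Qed.

Lemma pisometry_fix_bumps s p x x' : pisometry s ->
  s p = Some p -> (forall j, s (bump p j) = Some (bump p j)) ->
  s x = Some x' -> x' = x.
Proof.
move=> Siso sp sbump sx; apply/ffunP => j.
have Ep := Siso _ _ _ _ sx sp.
have Ej := Siso _ _ _ _ sx (sbump j).
rewrite !sqdist_bump Ep in Ej.
(* [lia] treats the finfun applications as atoms only once they are generalized. *)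
by move: Ej; move: (x' j) (x j) (p j) (sqdist x p) => a b c d; lia.
Qed.

Lemma npo_idempotent_fix_large e s : 0 < n -> idempotent_in e -> npo e s ->
  exists M, forall z : pt n, (forall i, M < z i) -> s z = Some z.
Proof.
move=> n_gt0 Eidem [f [Fidem es]].
have [[[_ _] _ _ [d Hd] _] _] := Eidem.
have [M HM] := bounded_coords d.
exists M => z Mz.
have Hz : inN z by move=> i; have := Mz i; lia.
case Ez: (e z) => [y|]; last first.
  have i0 : 'I_n := Ordinal n_gt0.
  by have := ltn_trans (Mz i0) (HM z (Hd z Hz Ez) i0); rewrite ltnn.
move: (Ez); rewrite (idempotent_in_fix Eidem Ez) es /Defs.pcomp.
by case: (s z) => [w|] //= /(idempotent_in_fix Fidem) ->.
Qed.

Lemma INinf_E_unitary : 0 < n -> E_unitary n.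
Proof.
move=> n_gt0 e s Eidem Sinf es.
have [_ _ Siso _ _] := Sinf.
have [M fix_large] := npo_idempotent_fix_large n_gt0 Eidem es.
pose p : pt n := [ffun => M.+1].
have sp : s p = Some p by apply: fix_large => i; rewrite ffunE.
have sbump j : s (bump p j) = Some (bump p j).
  by apply: fix_large => i; rewrite !ffunE; apply: leq_trans (leq_addr _ _).
have s_fix x x' : s x = Some x' -> x' = x := pisometry_fix_bumps Siso sp sbump.
split=> //; apply: functional_extensionality => x; rewrite /Defs.pcomp.
by case Sx: (s x) => [x'|] //=; move: (Sx); rewrite (s_fix _ _ Sx).
Qed.

End PartialCofiniteIsometries.

Theorem corollary4 (n : nat) (hn : 2 <= n) :
  is_inverse_monoid n /\ E_unitary n.
Proof.
split; first exact: INinf_inverse_monoid.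
by apply: INinf_E_unitary; apply: ltn_trans hn.
Qed.
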